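(* Let $\bar\pi^*$ be an optimal (cost-minimizing) policy for $\bar{\mathcal M}$ with state-action value $\bar Q^*$ and state value $\bar V^*$. Let $G_0$ be the set of intervention rules $(\bar Q,\mu,0)$ (threshold $\eta=0$) that are admissible and satisfy $\bar Q(d_0,\mu)=\bar V^*(d_0)$. Then $\mathcal G^*=(\bar Q^*,\bar\pi^*,0)\in G_0$, and for any $\mathcal G\in G_0$ and any policy $\pi$, $$\mathrm{Supp}_{\mathcal S\times\mathcal A}(\tilde d^{\pi})\subseteq \mathrm{Supp}_{\mathcal S\times\mathcal A}(\tilde d^{*,\pi}),$$ where $\tilde d^\pi$ and $\tilde d^{*,\pi}$ are the discounted state-action distributions of $\pi$ in the absorbing MDPs induced by $\mathcal G$ and $\mathcal G^*$ respectively, and $\mathrm{Supp}_{\mathcal S\times\mathcal A}(d)=\{(s,a)\in\mathcal S\times\mathcal A: d(s,a)>0\}$.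
   Context: $\mathcal M=(\mathcal S,\mathcal A,P,r,\gamma)$ is a discounted MDP with discrete state and action spaces (minima over actions attained), reward $r\in[0,1]$, discount $\gamma\in[0,1)$, initial distribution $d_0$. $\mathcal S$ contains two distinguished states $s_\triangleright,s_\circ$; $\mathcal S_{\mathrm{unsafe}}=\{s_\triangleright,s_\circ\}$, $\mathcal S_{\mathrm{safe}}=\mathcal S\setminus\mathcal S_{\mathrm{unsafe}}$; from $s_\triangleright$ every action leads to $s_\circ$ w.p. 1, $s_\circ$ is absorbing, $r=0$ on $\mathcal S_{\mathrm{unsafe}}$, $d_0(s_\circ)=0$. Cost $c(s,a)=\mathbb 1\{s=s_\triangleright\}$; $\bar{\mathcal M}=(\mathcal S,\mathcal A,P,c,\gamma)$; an optimal policy of $\bar{\mathcal M}$ minimizes the expected discounted cost from every state. For $g:\mathcal S\times\mathcal A\to\mathbb R$, $g(s,\mu)=\mathbb E_{a\sim\mu(\cdot|s)}g(s,a)$, $g(d_0,\mu)=\mathbb E_{s\sim d_0}g(s,\mu)$; $\bar V^*(d_0)=\mathbb E_{s\sim d_0}\bar V^*(s)$. Intervention rule: a triple $\mathcal G=(\bar Q,\mu,\eta)$ with backup policy $\mu$, $\eta\in[0,1]$, $\bar Q:\mathcal S_{\mathrm{safe}}\times\mathcal A\to[0,1]$ extended by $\bar Q(s_\triangleright,a)=1$, $\bar Q(s_\circ,a)=0$; intervention set $\mathcal I=\{(s,a)\in\mathcal S_{\mathrm{safe}}\times\mathcal A:\bar Q(s,a)-\bar Q(s,\mu)>\eta\}$.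 It is admissible if for all $s\in\mathcal S_{\mathrm{safe}},a$: $\bar Q(s,a)\in[0,\gamma]$ and $\bar Q(s,a)\ge c(s,a)+\gamma\mathbb E_{s'\sim P(\cdot|s,a)}[\bar Q(s',\mu)]$. Absorbing MDP induced by $\mathcal G$ (with a constant $\tilde R\le0$): state space $\mathcal S\cup\{s_\dagger\}$; reward $\tilde R$ on $\mathcal I$, $0$ at $s_\dagger$, $r$ otherwise; from $(s,a)\in\mathcal I$ or from $s_\dagger$ the next state is $s_\dagger$ w.p. 1, otherwise transitions follow $P$. Policies are extended to $s_\dagger$ arbitrarily. The discounted state-action distribution of $\pi$ is $\tilde d^\pi(s,a)=(1-\gamma)\sum_t\gamma^t\Pr(s_t=s,a_t=a)$ for trajectories of $\pi$ from $s_0\sim d_0$ in this MDP. *)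

From HB Require Import structures.
From mathcomp Require Import all_boot all_order all_algebra.
From mathcomp Require Import all_classical all_reals.
From mathcomp Require Import ereal topology normedtype sequences esum.
Set Implicit Arguments. Unset Strict Implicit. Unset Printing Implicit Defensive.
Import Order.TTheory GRing.Theory Num.Theory.
Local Open Scope classical_set_scope.
Local Open Scope ring_scope.
Local Open Scope ereal_scope.

Section Defs.
Variables (R : realType).

Definition is_distr (T : choiceType) (p : T -> R) :=
  (forall x, (0 <= p x)%R) /\ \esum_(x in [set: T]) (p x)%:E = 1.

Definition is_policy (T A : choiceType) (pol : T -> A -> R) :=
  forall s, is_distr (pol s).

(* state marginals Pr(s_t = x) of the trajectory of [pol] in the MDP with
   transition kernel [K] and initial distribution [init] *)
Fixpoint flow (T A : choiceType) (K : T -> A -> T -> R) (pol : T -> A -> R)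
  (init : T -> \bar R) (t : nat) : T -> \bar R :=
  match t with
  | 0%N => init
  | t'.+1 => fun y => \esum_(x in [set: T]) \esum_(a in [set: A])
                 (flow K pol init t' x * (pol x a)%:E * (K x a y)%:E)
  end.

Variables (S A : choiceType) (s_tri s_circ : S) (P : S -> A -> S -> R)
  (gamma : R).

Definition safe (s : S) : bool := (s != s_tri) && (s != s_circ).

Definition cost (s : S) (a : A) : R := if s == s_tri then 1%R else 0%R.

Definition dirac (s : S) : S -> \bar R := fun x => if x == s then 1 else 0.

Definition Vc (mu : S -> A -> R) (s : S) : \bar R :=
  \sum_(t <oo) ((gamma ^+ t)%:E *
     \esum_(x in [set: S]) \esum_(a in [set: A])
        (flow P mu (dirac s) t x * (mu x a)%:E * (cost x a)%:E)).

Definition Qc (mu : S -> A -> R) (s : S) (a : A) : \bar R :=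
  (cost s a)%:E + gamma%:E * \esum_(s' in [set: S]) ((P s a s')%:E * Vc mu s').

Definition optimal_policy (mu : S -> A -> R) :=
  is_policy mu /\
  forall nu : S -> A -> R, is_policy nu -> forall s, Vc mu s <= Vc nu s.

Definition at_pol (g : S -> A -> \bar R) (mu : S -> A -> R) (s : S) : \bar R :=
  \esum_(a in [set: A]) ((mu s a)%:E * g s a).

Definition at_init (d0 : S -> R) (f : S -> \bar R) : \bar R :=
  \esum_(s in [set: S]) ((d0 s)%:E * f s).

(* Qbar : S_safe x A -> [0,1], extended by 1 on s_tri and 0 on s_circ *)
Definition is_Qbar (Q : S -> A -> \bar R) :=
  (forall s a, safe s -> 0 <= Q s a <= 1) /\
  (forall a, Q s_tri a = 1) /\ (forall a, Q s_circ a = 0).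

Definition interv (Q : S -> A -> \bar R) (mu : S -> A -> R) (eta : R)
  (s : S) (a : A) : bool :=
  safe s && (Q s a - at_pol Q mu s > eta%:E).

Definition admissible (Q : S -> A -> \bar R) (mu : S -> A -> R) :=
  forall s a, safe s ->
    (0 <= Q s a <= gamma%:E) /\
    Q s a >= (cost s a)%:E +
             gamma%:E * \esum_(s' in [set: S]) ((P s a s')%:E * at_pol Q mu s').

Definition in_G0 (d0 : S -> R) (Vstar : S -> \bar R)
  (Q : S -> A -> \bar R) (mu : S -> A -> R) :=
  is_Qbar Q /\ is_policy mu /\ admissible Q mu /\
  at_init d0 (at_pol Q mu) = at_init d0 Vstar.

(* absorbing MDP induced by (Q, mu, eta); state space option S,
   None = s_dagger *)
Definition Pabs (Q : S -> A -> \bar R) (mu : S -> A -> R) (eta : R)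
  (x : option S) (a : A) (y : option S) : R :=
  match x with
  | None => if y is None then 1%R else 0%R
  | Some s =>
      if interv Q mu eta s a then (if y is None then 1%R else 0%R)
      else (if y is Some s' then P s a s' else 0%R)
  end.

Definition init_abs (d0 : S -> R) (x : option S) : \bar R :=
  if x is Some s then (d0 s)%:E else 0.

Definition dtilde (d0 : S -> R) (Q : S -> A -> \bar R) (mu : S -> A -> R)
  (eta : R) (pi : option S -> A -> R) (s : S) (a : A) : \bar R :=
  (1 - gamma)%:E * \sum_(t <oo) ((gamma ^+ t)%:E *
     (flow (Pabs Q mu eta) pi (init_abs d0) t (Some s) * (pi (Some s) a)%:E)).

End Defs.

From Pilot Require Import Defs.
From HB Require Import structures.
From mathcomp Require Import all_boot all_order all_algebra.
From mathcomp Require Import all_classical all_reals.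
From mathcomp Require Import ereal topology normedtype sequences esum.
Import Order.TTheory GRing.Theory Num.Theory.
Local Open Scope classical_set_scope.
Local Open Scope ring_scope.
Local Open Scope ereal_scope.

(* Let (Q, mu, 0) be a rule of G_0 and fQ := Q(., mu).  Admissibility makes fQ
   a supersolution of the Bellman equation of mu in the cost MDP, so
   Vbar* <= Vbar^mu <= fQ <= 1; since fQ and Vbar* have the same d0-average,
   they agree on the support of d0.  At a state s with fQ s = Vbar* s, an action
   a that the rule lets through satisfies
     Vbar* s <= Qbar* s a <= backup fQ s a <= Q s a <= fQ s = Vbar* s,
   so G* lets it through as well, and for gamma > 0 the resulting equality
   E_{P(s,a)} fQ = E_{P(s,a)} Vbar* forces fQ = Vbar* on the support of
   P(.|s,a).  By induction along the trajectories of pi, every state-action pair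
   reached with positive discounted weight under the rule is reached under G*. *)

Local Notation expect p f := (\esum_(x in [set: _]) ((p x)%:E * f x)).

Section esum_nonneg.
Context {R : realType}.

Lemma esum_ge_term [T : choiceType] (a : T -> \bar R) i :
  (forall j, 0 <= a j) -> a i <= \esum_(j in [set: T]) a j.
Proof.
move=> a0; apply: esum_ge; exists [set i]; first by split; [exact: finite_set1|].
by rewrite fsbig_set1.
Qed.

Lemma esum_gt0P [T : choiceType] (a : T -> \bar R) :
  (forall j, 0 <= a j) -> 0 < \esum_(j in [set: T]) a j <-> exists i, 0 < a i.
Proof.
move=> a0; split => [sum_gt0|[i ai_gt0]]; last first.
  exact: lt_le_trans ai_gt0 (esum_ge_term _ i a0).
apply: contrapT => no_pos; move: sum_gt0; rewrite esum1 ?ltxx// => i _.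
by apply/eqP; rewrite eq_le a0 andbT leNgt; apply/negP => ai; apply: no_pos; exists i.
Qed.

Lemma esum_single [T : choiceType] (s : T) (f : T -> \bar R) :
  0 <= f s -> (forall x, x != s -> f x = 0) -> \esum_(x in [set: T]) f x = f s.
Proof.
move=> fs0 f0; rewrite -(esum_set1 fs0) [RHS]esum_mkcond; apply: eq_esum => x _.
have [->|xs] := eqVneq x s; first by rewrite mem_set.
by rewrite memNset ?f0// => /= xs'; rewrite xs' eqxx in xs.
Qed.

Lemma esumZl [T : choiceType] (x : \bar R) (a : T -> \bar R) :
  0 <= x -> (forall j, 0 <= a j) ->
  \esum_(j in [set: T]) (x * a j) = x * \esum_(j in [set: T]) a j.
Proof.
move=> x0 a0; apply/eqP; rewrite eq_le; apply/andP; split.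
  apply: ge_ereal_sup => _ [X [finX _] <-].
  rewrite fsbig_finite//= -ge0_sume_distrr//.
  by apply: lee_wpmul2l => //; apply: esum_ge; exists X => //; rewrite fsbig_finite.
case: x x0 => [r r0|_|//].
- rewrite lee_fin in r0; have [r_gt0|r_le0] := ltP 0%R r; last first.
    have -> : r = 0%R by apply/eqP; rewrite eq_le r_le0 r0.
    by rewrite mul0e; apply: esum_ge0 => j _; rewrite mul0e.
  rewrite /esum -ereal_sup_pZl//; apply: ge_ereal_sup => _ [_ [X XD <-] <-].
  apply: ereal_sup_ubound; exists X => //; case: XD => finX _.
  by rewrite !fsbig_finite//= -ge0_sume_distrr.
- have [->|sum_neq0] := eqVneq (\esum_(j in [set: T]) a j) 0.
    by rewrite mule0; apply: esum_ge0 => j _; rewrite mule_ge0.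
  have sum_gt0 : 0 < \esum_(j in [set: T]) a j by rewrite lt0e sum_neq0 esum_ge0.
  have [i ai_gt0] := (esum_gt0P a a0).1 sum_gt0.
  rewrite gt0_mulye//.
  have := esum_ge_term _ i (fun j => mule_ge0 (le0y : 0 <= +oo) (a0 j)).
  by rewrite gt0_mulye.
Qed.

Lemma esumZr [T : choiceType] (x : \bar R) (a : T -> \bar R) :
  0 <= x -> (forall j, 0 <= a j) ->
  \esum_(j in [set: T]) (a j * x) = (\esum_(j in [set: T]) a j) * x.
Proof.
by move=> x0 a0; rewrite [RHS]muleC -esumZl//; apply: eq_esum => j _; rewrite muleC.
Qed.

Lemma exchange_esum [T1 T2 : choiceType] (a : T1 -> T2 -> \bar R) :
  (forall i j, 0 <= a i j) ->
  \esum_(i in [set: T1]) \esum_(j in [set: T2]) a i j =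
  \esum_(j in [set: T2]) \esum_(i in [set: T1]) a i j.
Proof.
move=> a0; rewrite !esum_esum//.
rewrite (reindex_esum (setT `*`` (fun _ => setT)) (setT `*`` (fun _ => setT))
   (fun k : T1 * T2 => (k.2, k.1))) //.
split=> [[x y] _ //|[x y] [x' y'] _ _ [-> ->] //|[x y] _]; by exists (y, x).
Qed.

Lemma nneseries_gt0P (f : nat -> \bar R) :
  (forall t, 0 <= f t) -> 0 < \sum_(t <oo) f t <-> exists t, 0 < f t.
Proof. by move=> f0; rewrite nneseries_esumT//; exact: esum_gt0P. Qed.

Lemma ge0_nneseriesZl (c : \bar R) (f : nat -> \bar R) :
  0 <= c -> (forall t, 0 <= f t) ->
  \sum_(t <oo) (c * f t) = c * \sum_(t <oo) f t.
Proof.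
by move=> c0 f0; rewrite !nneseries_esumT ?esumZl// => t; rewrite mule_ge0.
Qed.

Lemma exchange_nneseries_esum [T : choiceType] (f : nat -> T -> \bar R) :
  (forall t x, 0 <= f t x) ->
  \sum_(t <oo) \esum_(x in [set: T]) f t x =
  \esum_(x in [set: T]) \sum_(t <oo) f t x.
Proof.
move=> f0; rewrite nneseries_esumT; last by move=> t; exact: esum_ge0.
by rewrite exchange_esum//; apply: eq_esum => x _; rewrite nneseries_esumT.
Qed.

Lemma nneseries_recS (f : nat -> \bar R) :
  (forall t, 0 <= f t) -> \sum_(t <oo) f t = f 0%N + \sum_(t <oo) f t.+1.
Proof.
move=> f0; rewrite nneseries_recl// -(nneseries_addn 1)//.
by congr (_ + _); apply/congr_lim/funext => n; apply: eq_bigr => i _; rewrite addn1.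
Qed.

End esum_nonneg.

Section expectation.
Context {R : realType} {T : choiceType}.
Implicit Types (p : T -> R) (f g : T -> \bar R).

Lemma expect_ge0 p f :
  (forall x, 0 <= p x)%R -> (forall x, 0 <= f x) -> 0 <= expect p f.
Proof. by move=> p0 f0; apply: esum_ge0 => x _; rewrite mule_ge0 ?lee_fin. Qed.

Lemma le_expect p f g :
  (forall x, 0 <= p x)%R -> (forall x, f x <= g x) -> expect p f <= expect p g.
Proof. by move=> p0 fg; apply: le_esum => x _; rewrite lee_wpmul2l ?lee_fin. Qed.

Lemma expect_cst p c :
  is_distr p -> 0 <= c -> \esum_(x in [set: T]) ((p x)%:E * c) = c.
Proof. by move=> [p0 p1] c0; rewrite esumZr ?p1 ?mul1e// => x; rewrite lee_fin. Qed.

Lemma expect_le_cst p f c :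
  is_distr p -> 0 <= c -> (forall x, f x <= c) -> expect p f <= c.
Proof.
move=> pd c0 fc; rewrite -[leRHS](expect_cst _ _ pd c0).
by apply: le_expect => //; case: pd.
Qed.

Lemma distr1_eq0 p y0 y : is_distr p -> p y0 = 1%R -> y != y0 -> p y = 0%R.
Proof.
move=> [p0 p1] py0 yy0; apply/eqP; rewrite eq_le p0 andbT -lee_fin.
have : (p y0)%:E + (p y)%:E <= \esum_(x in [set: T]) (p x)%:E.
  apply: esum_ge; exists [set y0; y]; first by split => //; exact: finite_set2.
  rewrite fsbigU0 ?fsbig_set1//; try exact: finite_set1.
  by move=> x [/= -> e]; rewrite e eqxx in yy0.
by rewrite p1 py0 -[leRHS]adde0 leeD2lE.
Qed.

(* Both sides are finite, so the inequality can be subtracted termwise: the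
   nonnegative gap [f - g] then has zero expectation. *)
Lemma expect_le_eq_supp p f g :
  is_distr p -> (forall x, 0 <= g x) -> (forall x, g x <= f x) ->
  (forall x, f x <= 1) -> expect p f <= expect p g ->
  forall x, (0 < p x)%R -> f x = g x.
Proof.
move=> pd g0 gf f1 fg x px_gt0; have [p0 _] := pd.
have g_fin y : g y \is a fin_num.
  by rewrite ge0_fin_numE// (le_lt_trans (gf y))// (le_lt_trans (f1 y))// ltry.
have fE y : f y = (f y - g y) + g y by rewrite subeK.
have gap0 y : 0 <= f y - g y by rewrite sube_ge0 ?g_fin.
have Eg_fin : expect p g \is a fin_num.
  rewrite ge0_fin_numE ?expect_ge0// (le_lt_trans _ (ltry 1))//.
  by apply: (expect_le_cst _ _ _ pd lee01) => y; exact: le_trans (gf y) (f1 y).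
have Egap0 : expect p (fun y => f y - g y) <= 0.
  rewrite -(leeD2lE _ _ Eg_fin) adde0 (le_trans _ fg)// -esumD; last 2 first.
  - by move=> y _; rewrite mule_ge0 ?lee_fin.
  - by move=> y _; rewrite mule_ge0 ?lee_fin.
  by apply: le_esum => y _; rewrite -ge0_muleDr// addeC -fE.
have : (p x)%:E * (f x - g x) == 0.
  rewrite eq_le mule_ge0 ?lee_fin ?andbT ?gap0//; apply: le_trans Egap0.
  by apply: esum_ge_term => y; rewrite mule_ge0 ?lee_fin.
by rewrite mule_eq0 eqe (gt_eqF px_gt0) => /eqP gx0; rewrite fE gx0 add0e.
Qed.

End expectation.

Lemma policy_ge0 {R : realType} [T B : choiceType] [mu : T -> B -> R] :
  is_policy mu -> forall x a, (0 <= mu x a)%R.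
Proof. by move=> H x a; case: (H x). Qed.

Lemma at_pol_cst {R : realType} [S A : choiceType] (g : S -> A -> \bar R)
    (mu : S -> A -> R) s c :
  is_policy mu -> 0 <= c -> (forall a, g s a = c) -> at_pol g mu s = c.
Proof.
move=> mu_policy c0 gc; rewrite /at_pol.
by under eq_esum do rewrite gc; exact: expect_cst.
Qed.

Section flow.
Context {R : realType} {T A : choiceType}.
Variables (K : T -> A -> T -> R) (pol : T -> A -> R).
Hypothesis K_ge0 : forall x a y, (0 <= K x a y)%R.
Hypothesis pol_ge0 : forall x a, (0 <= pol x a)%R.
Implicit Types rho : T -> \bar R.

Lemma dirac_ge0 (x y : T) : 0 <= dirac R x y.
Proof. by rewrite /dirac; case: ifP. Qed.

Lemma esum_dirac (s : T) (g : T -> \bar R) :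
  0 <= g s -> \esum_(x in [set: T]) (dirac R s x * g x) = g s.
Proof.
move=> gs0; rewrite (esum_single s) /dirac ?eqxx ?mul1e// => x xs.
by rewrite (negbTE xs) mul0e.
Qed.

Lemma flow_ge0 rho t y : (forall x, 0 <= rho x) -> 0 <= flow K pol rho t y.
Proof.
move=> rho0; elim: t y => [|t IH] y //=.
by apply: esum_ge0 => x _; apply: esum_ge0 => a _; rewrite !mule_ge0 ?lee_fin.
Qed.

Lemma flowS_gt0P rho t y : (forall x, 0 <= rho x) ->
  0 < flow K pol rho t.+1 y <->
  exists x a, [/\ 0 < flow K pol rho t x, (0 < pol x a)%R & (0 < K x a y)%R].
Proof.
move=> rho0.
have term0 x a : 0 <= flow K pol rho t x * (pol x a)%:E * (K x a y)%:E.
  by rewrite !mule_ge0 ?lee_fin ?flow_ge0.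
have row0 x : 0 <= \esum_(a in [set: A])
    (flow K pol rho t x * (pol x a)%:E * (K x a y)%:E).
  exact: esum_ge0.
split => [/(esum_gt0P _ row0) [x /(esum_gt0P _ (term0 x)) [a]]|[x [a [Fx pa Ka]]]].
  have Fx0 : 0 <= flow K pol rho t x by exact: flow_ge0.
  have pa0 : 0 <= (pol x a)%:E by rewrite lee_fin.
  have Ka0 : 0 <= (K x a y)%:E by rewrite lee_fin.
  rewrite mule_ge0_gt0 ?mule_ge0// mule_ge0_gt0// !lte_fin.
  by move=> /andP[/andP[Fx pa] Ka]; exists x, a.
apply/(esum_gt0P _ row0); exists x; apply/(esum_gt0P _ (term0 x)).2; exists a.
by rewrite !mule_gt0 ?lte_fin.
Qed.

Lemma esum_flowS rho (g : T -> \bar R) t :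
  (forall x, 0 <= rho x) -> (forall y, 0 <= g y) ->
  \esum_(y in [set: T]) (flow K pol rho t.+1 y * g y) =
  \esum_(x in [set: T]) (flow K pol rho t x *
     \esum_(a in [set: A]) ((pol x a)%:E * expect (K x a) g)).
Proof.
move=> rho0 g0; set F := flow K pol rho t.
have F0 x : 0 <= F x by exact: flow_ge0.
have term0 x a y : 0 <= F x * (pol x a)%:E * (K x a y)%:E * g y.
  by rewrite !mule_ge0 ?lee_fin.
transitivity (\esum_(y in [set: T]) \esum_(x in [set: T]) \esum_(a in [set: A])
    (F x * (pol x a)%:E * (K x a y)%:E * g y)).
  apply: eq_esum => y _; rewrite /= -esumZr//; last first.
    by move=> x; apply: esum_ge0 => a _; rewrite !mule_ge0 ?lee_fin.
  by apply: eq_esum => x _; rewrite -esumZr// => a; rewrite !mule_ge0 ?lee_fin.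
rewrite exchange_esum; last by move=> y x; exact: esum_ge0.
apply: eq_esum => x _; rewrite exchange_esum// -esumZl//; last first.
  by move=> a; rewrite mule_ge0 ?lee_fin//; apply: expect_ge0.
apply: eq_esum => a _; rewrite muleA -esumZl ?mule_ge0 ?lee_fin//.
  by apply: eq_esum => y _; rewrite !muleA.
by move=> y; rewrite mule_ge0 ?lee_fin.
Qed.

Lemma flowSr rho t : flow K pol rho t.+1 = flow K pol (flow K pol rho 1) t.
Proof.
elim: t => [|t IH] //.
by transitivity (fun y => \esum_(x in [set: T]) \esum_(a in [set: A])
  (flow K pol rho t.+1 x * (pol x a)%:E * (K x a y)%:E)); rewrite // IH.
Qed.

Lemma flow_dirac_lin rho t z : (forall x, 0 <= rho x) ->
  flow K pol rho t z = \esum_(x in [set: T]) (rho x * flow K pol (dirac R x) t z).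
Proof.
have Fd0 x t' y : 0 <= flow K pol (dirac R x) t' y by apply/flow_ge0/dirac_ge0.
move=> rho0; elim: t z => [|t IH] z /=.
  rewrite (esum_single z) ?mule_ge0 ?dirac_ge0//; first by rewrite /dirac eqxx mule1.
  by move=> x xz; rewrite /dirac eq_sym (negbTE xz) mule0.
have term0 x y a :
    0 <= rho x * (flow K pol (dirac R x) t y * (pol y a)%:E * (K y a z)%:E).
  by rewrite !mule_ge0 ?lee_fin.
transitivity (\esum_(y in [set: T]) \esum_(a in [set: A]) \esum_(x in [set: T])
   (rho x * (flow K pol (dirac R x) t y * (pol y a)%:E * (K y a z)%:E))).
  apply: eq_esum => y _; apply: eq_esum => a _.
  rewrite IH -esumZr ?lee_fin//; last by move=> x; rewrite mule_ge0.
  rewrite -esumZr ?lee_fin//; last by move=> x; rewrite !mule_ge0 ?lee_fin.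
  by apply: eq_esum => x _; rewrite !muleA.
under eq_esum do rewrite exchange_esum//.
rewrite exchange_esum; last by move=> y x; apply: esum_ge0.
apply: eq_esum => x _; rewrite -esumZl//; last first.
  by move=> y; apply: esum_ge0 => a _; rewrite !mule_ge0 ?lee_fin.
by apply: eq_esum => y _; rewrite -esumZl// => a; rewrite !mule_ge0 ?lee_fin.
Qed.

End flow.

Section policy_evaluation.
Context {R : realType} {S A : choiceType}.
Variables (s_tri : S) (P : S -> A -> S -> R) (gamma : R).
Hypothesis P_ge0 : forall s a y, (0 <= P s a y)%R.
Hypothesis gamma_ge0 : (0 <= gamma)%R.

Lemma cost_ge0 s (a : A) : 0 <= (cost R s_tri s a)%:E.
Proof. by rewrite lee_fin /cost; case: ifP. Qed.

Definition backup (f : S -> \bar R) (s : S) (a : A) : \bar R :=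
  (cost R s_tri s a)%:E + gamma%:E * expect (P s a) f.

Lemma backup_ge0 f s (a : A) : (forall y, 0 <= f y) -> 0 <= backup f s a.
Proof. by move=> f0; rewrite adde_ge0 ?cost_ge0// mule_ge0 ?lee_fin ?expect_ge0. Qed.

Lemma le_backup f g s (a : A) : (forall y, f y <= g y) -> backup f s a <= backup g s a.
Proof. by move=> fg; rewrite leeD2l// lee_wpmul2l ?lee_fin ?le_expect. Qed.

Lemma backup_le_expect f g s (a : A) : (0 < gamma)%R ->
  backup f s a <= backup g s a -> expect (P s a) f <= expect (P s a) g.
Proof. by move=> gamma_gt0; rewrite leeD2lE// lee_pmul2l ?lte_fin. Qed.

Variable mu : S -> A -> R.
Hypothesis mu_ge0 : forall s a, (0 <= mu s a)%R.

Definition stage_cost (rho : S -> \bar R) t :=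
  \esum_(x in [set: S]) \esum_(a in [set: A])
     (flow P mu rho t x * (mu x a)%:E * (cost R s_tri x a)%:E).

Lemma VcE s :
  Vc s_tri P gamma mu s = \sum_(t <oo) ((gamma ^+ t)%:E * stage_cost (dirac R s) t).
Proof. by []. Qed.

Lemma stage_cost_ge0 rho t : (forall x, 0 <= rho x) -> 0 <= stage_cost rho t.
Proof.
move=> rho0; apply: esum_ge0 => x _; apply: esum_ge0 => a _.
by rewrite !mule_ge0 ?cost_ge0 ?lee_fin ?flow_ge0.
Qed.

Lemma Vc_ge0 s : 0 <= Vc s_tri P gamma mu s.
Proof.
apply: nneseries_ge0 => t _ _.
by rewrite mule_ge0 ?lee_fin ?exprn_ge0 ?stage_cost_ge0// => x; exact: dirac_ge0.
Qed.

Lemma stage_costE rho t : (forall x, 0 <= rho x) ->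
  stage_cost rho t = \esum_(x in [set: S])
    (flow P mu rho t x * \esum_(a in [set: A]) ((mu x a)%:E * (cost R s_tri x a)%:E)).
Proof.
move=> rho0; apply: eq_esum => x _; rewrite -esumZl; last 2 first.
- exact: flow_ge0.
- by move=> a; rewrite mule_ge0 ?cost_ge0 ?lee_fin.
by apply: eq_esum => a _; rewrite muleA.
Qed.

Lemma at_pol_backup f s : (forall y, 0 <= f y) ->
  at_pol (backup f) mu s =
  \esum_(a in [set: A]) ((mu s a)%:E * (cost R s_tri s a)%:E) +
  gamma%:E * \esum_(a in [set: A]) ((mu s a)%:E * expect (P s a) f).
Proof.
move=> f0; have Pf0 a : 0 <= expect (P s a) f by exact: expect_ge0.
rewrite -esumZl ?lee_fin//; last by move=> a; rewrite mule_ge0 ?lee_fin.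
rewrite -esumD; last 2 first.
- by move=> a _; rewrite mule_ge0 ?cost_ge0 ?lee_fin.
- by move=> a _; rewrite !mule_ge0 ?lee_fin.
apply: eq_esum => a _; rewrite /backup ge0_muleDr ?cost_ge0 ?mule_ge0 ?lee_fin//.
by rewrite muleCA.
Qed.

Lemma esum_flow_backup rho f t :
  (forall x, 0 <= rho x) -> (forall y, 0 <= f y) ->
  \esum_(x in [set: S]) (flow P mu rho t x * at_pol (backup f) mu x) =
  stage_cost rho t + gamma%:E * \esum_(y in [set: S]) (flow P mu rho t.+1 y * f y).
Proof.
move=> rho0 f0; have F0 x := flow_ge0 P mu P_ge0 mu_ge0 rho t x rho0.
have Pf0 x a : 0 <= (mu x a)%:E * expect (P x a) f.
  by rewrite mule_ge0 ?lee_fin ?expect_ge0.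
rewrite esum_flowS// stage_costE// -esumZl ?lee_fin//; last first.
  by move=> x; rewrite mule_ge0 ?esum_ge0.
rewrite -esumD; last 2 first.
- move=> x _; rewrite mule_ge0 ?esum_ge0// => a _.
  by rewrite mule_ge0 ?cost_ge0 ?lee_fin.
- by move=> x _; rewrite mule_ge0 ?lee_fin ?mule_ge0 ?esum_ge0.
apply: eq_esum => x _.
rewrite at_pol_backup// ge0_muleDr ?mule_ge0 ?lee_fin ?esum_ge0//.
  by rewrite muleCA.
by move=> a _; rewrite mule_ge0 ?cost_ge0 ?lee_fin.
Qed.

Section supersolution.
Variable f : S -> \bar R.
Hypothesis f_ge0 : forall y, 0 <= f y.
Hypothesis f_super : forall s, at_pol (backup f) mu s <= f s.

Lemma discounted_cost_le_super rho n : (forall x, 0 <= rho x) ->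
  (\sum_(0 <= t < n) ((gamma ^+ t)%:E * stage_cost rho t) +
   (gamma ^+ n)%:E * \esum_(y in [set: S]) (flow P mu rho n y * f y))
  <= \esum_(x in [set: S]) (rho x * f x).
Proof.
move=> rho0; have F0 t y := flow_ge0 P mu P_ge0 mu_ge0 rho t y rho0.
elim: n => [|n IH]; first by rewrite big_nil add0e expr0 mul1e.
apply: le_trans IH; rewrite big_nat_recr// -addeA leeD2l// exprSr EFinM -muleA.
rewrite -ge0_muleDr ?stage_cost_ge0 ?mule_ge0 ?lee_fin ?esum_ge0 ?exprn_ge0//;
  last first.
  by move=> y _; rewrite mule_ge0.
rewrite lee_wpmul2l ?lee_fin ?exprn_ge0// -esum_flow_backup//.
by apply: le_esum => x _; rewrite lee_wpmul2l.
Qed.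

Lemma Vc_le_super s : Vc s_tri P gamma mu s <= f s.
Proof.
have term0 t : 0 <= (gamma ^+ t)%:E * stage_cost (dirac R s) t.
  by rewrite mule_ge0 ?lee_fin ?exprn_ge0 ?stage_cost_ge0// => x; exact: dirac_ge0.
apply: lime_le; first by apply: is_cvg_nneseries => n _ _.
apply: nearW => n; rewrite -[leRHS](esum_dirac s) //.
apply: le_trans (discounted_cost_le_super (dirac R s) n (dirac_ge0 s)).
rewrite leeDl// mule_ge0 ?lee_fin ?exprn_ge0// esum_ge0// => y _.
by rewrite mule_ge0 ?flow_ge0// => x; exact: dirac_ge0.
Qed.

End supersolution.

Lemma stage_cost_lin rho t : (forall x, 0 <= rho x) ->
  stage_cost rho t = \esum_(x in [set: S]) (rho x * stage_cost (dirac R x) t).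
Proof.
move=> rho0; have Fd0 x t' y : 0 <= flow P mu (dirac R x) t' y.
  by apply: flow_ge0 => // z; exact: dirac_ge0.
have term0 x y a :
    0 <= rho x * (flow P mu (dirac R x) t y * (mu y a)%:E * (cost R s_tri y a)%:E).
  by rewrite !mule_ge0 ?cost_ge0 ?lee_fin.
transitivity (\esum_(y in [set: S]) \esum_(a in [set: A]) \esum_(x in [set: S])
   (rho x * (flow P mu (dirac R x) t y * (mu y a)%:E * (cost R s_tri y a)%:E))).
  apply: eq_esum => y _; apply: eq_esum => a _.
  rewrite (flow_dirac_lin _ _ P_ge0 mu_ge0)// -esumZr ?lee_fin//; last first.
    by move=> x; rewrite mule_ge0.
  rewrite -esumZr ?cost_ge0//; last by move=> x; rewrite !mule_ge0 ?lee_fin.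
  by apply: eq_esum => x _; rewrite !muleA.
under eq_esum do rewrite exchange_esum//.
rewrite exchange_esum; last by move=> y x; exact: esum_ge0.
apply: eq_esum => x _; rewrite -esumZl//; last first.
  by move=> y; apply: esum_ge0 => a _; rewrite !mule_ge0 ?cost_ge0 ?lee_fin.
by apply: eq_esum => y _; rewrite -esumZl// => a; rewrite !mule_ge0 ?cost_ge0 ?lee_fin.
Qed.

Lemma esum_flow1_dirac s g : (forall y, 0 <= g y) ->
  \esum_(y in [set: S]) (flow P mu (dirac R s) 1 y * g y) =
  \esum_(a in [set: A]) ((mu s a)%:E * expect (P s a) g).
Proof.
move=> g0; rewrite esum_flowS//; last exact: dirac_ge0.
apply: (esum_dirac s (fun x => \esum_(a in [set: A]) ((mu x a)%:E * expect (P x a) g))).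
by apply: esum_ge0 => a _; rewrite mule_ge0 ?lee_fin ?expect_ge0.
Qed.

Lemma Vc_bellman s : at_pol (Qc s_tri P gamma mu) mu s = Vc s_tri P gamma mu s.
Proof.
have C0 x t : 0 <= stage_cost (dirac R x) t.
  by apply: stage_cost_ge0 => y; exact: dirac_ge0.
have g_t t : 0 <= (gamma ^+ t)%:E by rewrite lee_fin exprn_ge0.
have F1 x : 0 <= flow P mu (dirac R s) 1 x.
  by apply: flow_ge0 => // y; exact: dirac_ge0.
rewrite (at_pol_backup _ _ Vc_ge0) VcE nneseries_recS; last first.
  by move=> t; rewrite mule_ge0.
rewrite expr0 mul1e stage_costE; last exact: dirac_ge0.
rewrite (esum_dirac s); last first.
  by apply: esum_ge0 => a _; rewrite mule_ge0 ?cost_ge0 ?lee_fin.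
rewrite -esum_flow1_dirac; last exact: Vc_ge0.
congr (_ + _); symmetry; transitivity (\sum_(t <oo) (gamma%:E * \esum_(x in [set: S])
    (flow P mu (dirac R s) 1 x * ((gamma ^+ t)%:E * stage_cost (dirac R x) t)))).
  apply/congr_lim/funext => n; apply: eq_bigr => t _.
  rewrite exprS EFinM -muleA /stage_cost flowSr -/(stage_cost _ t).
  rewrite stage_cost_lin//; congr (_ * _); rewrite -esumZl//; last first.
    by move=> x; rewrite mule_ge0.
  by apply: eq_esum => x _; rewrite muleCA.
rewrite nneseriesZl; last by move=> t _; apply: esum_ge0 => x _; rewrite !mule_ge0.
rewrite exchange_nneseries_esum; last by move=> t x; rewrite !mule_ge0.
congr (_ * _); apply: eq_esum => x _.
by rewrite ge0_nneseriesZl// => t; rewrite mule_ge0.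
Qed.

End policy_evaluation.

Section safety_mdp.
Context {R : realType} {S A : choiceType}.
Variables (s_tri s_circ : S) (P : S -> A -> S -> R) (gamma : R).
Hypothesis tri_neq_circ : s_tri != s_circ.
Hypothesis gamma01 : (0 <= gamma < 1)%R.
Hypothesis P_distr : forall s a, is_distr (P s a).
Hypothesis P_tri : forall a, P s_tri a s_circ = 1%R.
Hypothesis P_circ : forall a, P s_circ a s_circ = 1%R.

Let P_ge0 s a y : (0 <= P s a y)%R. Proof. by case: (P_distr s a). Qed.
Let gamma_ge0 : (0 <= gamma)%R. Proof. by case/andP: gamma01. Qed.
Let gamma_le1 : (gamma <= 1)%R. Proof. by case/andP: gamma01 => _ /ltW. Qed.

Local Notation safe := (safe s_tri s_circ).
Local Notation cost := (cost R s_tri).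
Local Notation backup := (backup s_tri P gamma).
Local Notation V mu := (Vc s_tri P gamma mu).

Lemma unsafeP [s] : ~~ safe s -> s = s_tri \/ s = s_circ.
Proof. by rewrite negb_and !negbK => /orP[/eqP|/eqP]; [left|right]. Qed.

Lemma cost_safe s (a : A) : safe s -> cost s a = 0%R.
Proof. by rewrite /Defs.cost => /andP[/negbTE -> _]. Qed.

Lemma cost_tri (a : A) : cost s_tri a = 1%R.
Proof. by rewrite /Defs.cost eqxx. Qed.

Lemma cost_circ (a : A) : cost s_circ a = 0%R.
Proof. by rewrite /Defs.cost eq_sym (negbTE tri_neq_circ). Qed.

Lemma expect_P_unsafe s (a : A) f :
  ~~ safe s -> 0 <= f s_circ -> expect (P s a) f = f s_circ.
Proof.
move=> s_unsafe f0; have Ps1 : P s a s_circ = 1%R by case: (unsafeP s_unsafe) => ->.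
rewrite (esum_single s_circ) ?Ps1 ?mul1e// => y y_circ.
by rewrite (distr1_eq0 _ _ _ (P_distr s a) Ps1 y_circ) mul0e.
Qed.

Lemma backup_unsafe f s (a : A) :
  ~~ safe s -> f s_circ = 0 -> backup f s a = (cost s a)%:E.
Proof. by move=> s_unsafe f0; rewrite /backup expect_P_unsafe ?f0 ?mule0 ?adde0. Qed.

Lemma intervN0E (Q : S -> A -> \bar R) (mu : S -> A -> R) s a :
  is_Qbar s_tri s_circ Q -> is_policy mu ->
  ~~ interv s_tri s_circ Q mu 0 s a = (Q s a <= at_pol Q mu s).
Proof.
move=> [_ [Q_tri Q_circ]] mu_policy; rewrite /interv.
have [s_safe|s_unsafe] := boolP (safe s); first by rewrite sube_gt0 -leNgt.
case: (unsafeP s_unsafe) => ->.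
  by rewrite Q_tri (at_pol_cst _ _ _ _ mu_policy lee01 Q_tri) lexx.
by rewrite Q_circ (at_pol_cst _ _ _ _ mu_policy (lexx 0) Q_circ) lexx.
Qed.

Lemma Pabs_ge0 Q mu eta x (a : A) y : (0 <= Pabs s_tri s_circ P Q mu eta x a y)%R.
Proof.
rewrite /Pabs; case: x => [s|]; case: y => [y|]; rewrite ?ler01//.
all: by case: ifP; rewrite ?ler01.
Qed.

Section value_bounds.
Variable mu : S -> A -> R.
Hypothesis mu_policy : is_policy mu.
Let mu_ge0 := policy_ge0 mu_policy.

Lemma Vc_le_indicator s : V mu s <= if s == s_circ then 0 else 1.
Proof.
set f1 := fun y : S => if y == s_circ then 0 else 1 : \bar R.
have f1_ge0 y : 0 <= f1 y by rewrite /f1; case: ifP.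
have f1_le1 y : f1 y <= 1 by rewrite /f1; case: ifP.
have f1_circ : f1 s_circ = 0 by rewrite /f1 eqxx.
apply: (Vc_le_super _ _ _ P_ge0 gamma_ge0 _ mu_ge0 _ f1_ge0) => {}s.
apply: expect_le_cst => // a.
have [s_safe|s_unsafe] := boolP (safe s).
  rewrite /backup cost_safe// add0e /f1; case/andP: s_safe => _ /negbTE ->.
  apply: (@le_trans _ _ (gamma%:E * 1)); last by rewrite mule1 lee_fin gamma_le1.
  by apply: lee_wpmul2l; [rewrite lee_fin|apply: expect_le_cst => //; exact: lee01].
rewrite backup_unsafe//; case: (unsafeP s_unsafe) => ->.
  by rewrite cost_tri /f1 (negbTE tri_neq_circ).
by rewrite cost_circ f1_circ.
Qed.

Lemma Vc_circ : V mu s_circ = 0.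
Proof.
apply/eqP; rewrite eq_le (Vc_ge0 _ _ _ P_ge0 gamma_ge0 _ mu_ge0) andbT.
by have := Vc_le_indicator s_circ; rewrite eqxx.
Qed.

Lemma Vc_le1 s : V mu s <= 1.
Proof. by apply: le_trans (Vc_le_indicator s) _; case: ifP. Qed.

End value_bounds.

Variable pistar : S -> A -> R.
Hypothesis pistar_opt : optimal_policy s_tri P gamma pistar.
Let pistar_policy : is_policy pistar. Proof. by case: pistar_opt. Qed.
Let pistar_ge0 := policy_ge0 pistar_policy.

Local Notation Qs := (Qc s_tri P gamma pistar).
Local Notation Vs := (V pistar).

Lemma Vs_ge0 s : 0 <= Vs s.
Proof. exact: (Vc_ge0 _ _ _ P_ge0 gamma_ge0 _ pistar_ge0). Qed.

Lemma at_pol_Qs s : at_pol Qs pistar s = Vs s.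
Proof. exact: (Vc_bellman _ _ _ P_ge0 gamma_ge0 _ pistar_ge0). Qed.

Lemma Qs_ge0 s (a : A) : 0 <= Qs s a.
Proof. exact: (backup_ge0 _ _ _ P_ge0 gamma_ge0 _ _ _ Vs_ge0). Qed.

Lemma Qs_unsafe s (a : A) : ~~ safe s -> Qs s a = (cost s a)%:E.
Proof.
by move=> s_unsafe; apply: backup_unsafe => //; exact: (Vc_circ _ pistar_policy).
Qed.

Lemma Qs_safe s (a : A) : safe s -> 0 <= Qs s a <= gamma%:E.
Proof.
move=> s_safe; rewrite /Qc cost_safe// add0e.
have EVs_ge0 : 0 <= expect (P s a) Vs by apply: expect_ge0 => //; exact: Vs_ge0.
rewrite mule_ge0 ?lee_fin//= -[leRHS]mule1.
apply: lee_wpmul2l; first by rewrite lee_fin.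
by apply: expect_le_cst => // y; exact: (Vc_le1 _ pistar_policy).
Qed.

(* If some action beat [pistar] at [s0], the policy switching to it at [s0]
   only would cost strictly less than [Vs s0], contradicting optimality. *)
Lemma Vs_le_Qs s0 a0 : Vs s0 <= Qs s0 a0.
Proof.
rewrite leNgt; apply/negP => Qs_lt.
pose nu x b : R := if x == s0 then (b == a0)%:R else pistar x b.
have nu_s0 (g : S -> A -> \bar R) : 0 <= g s0 a0 -> at_pol g nu s0 = g s0 a0.
  move=> g0; rewrite /at_pol (esum_single a0) /nu eqxx ?eqxx ?mul1e// => b ba0.
  by rewrite (negbTE ba0) mul0e.
have nu_policy : is_policy nu.
  move=> x; rewrite /nu; case: eqP => _; last exact: pistar_policy.
  split=> [b|]; first by case: (b == a0).
  by rewrite (esum_single a0) ?eqxx// => b /negbTE ->.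
have nu_ge0 := policy_ge0 nu_policy.
have V_nu_le : forall x, V nu x <= Vs x.
  apply: (Vc_le_super _ _ _ P_ge0 gamma_ge0 _ nu_ge0 _ Vs_ge0) => x.
  have [->|x_s0] := eqVneq x s0; first by rewrite nu_s0; [exact: ltW|exact: Qs_ge0].
  by rewrite -[leRHS]at_pol_Qs /at_pol /nu (negbTE x_s0).
have Vnu_s0 : V nu s0 = Qc s_tri P gamma nu s0 a0.
  rewrite -(Vc_bellman _ _ _ P_ge0 gamma_ge0 nu nu_ge0 s0).
  rewrite (nu_s0 (Qc s_tri P gamma nu))//.
  exact/(backup_ge0 _ _ _ P_ge0 gamma_ge0)/(Vc_ge0 _ _ _ P_ge0 gamma_ge0 _ nu_ge0).
have Qnu_lt : Qc s_tri P gamma nu s0 a0 < Vs s0.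
  exact: le_lt_trans (le_backup _ _ _ P_ge0 gamma_ge0 _ _ s0 a0 V_nu_le) Qs_lt.
by move: (proj2 pistar_opt nu nu_policy s0); rewrite Vnu_s0 leNgt Qnu_lt.
Qed.

Lemma Qstar_in_G0 d0 : in_G0 s_tri s_circ P gamma d0 Vs Qs pistar.
Proof.
have Qs_unsafeE a : Qs s_tri a = 1 /\ Qs s_circ a = 0.
  rewrite !Qs_unsafe ?cost_tri ?cost_circ//.
  - by rewrite /Defs.safe eqxx andbF.
  - by rewrite /Defs.safe eqxx.
split; [split; [|split]|split; [exact: pistar_policy|split]].
- move=> s a s_safe; have /andP[-> Qs_le] := Qs_safe s a s_safe.
  by rewrite (le_trans Qs_le)// lee_fin.
- by move=> a; case: (Qs_unsafeE a).
- by move=> a; case: (Qs_unsafeE a).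
- move=> s a s_safe; split; first exact: Qs_safe.
  by apply: (le_backup _ _ _ P_ge0 gamma_ge0) => y; rewrite at_pol_Qs.
- by apply: eq_esum => s _; rewrite at_pol_Qs.
Qed.

Section rule_in_G0.
Variables (d0 : S -> R) (Q : S -> A -> \bar R) (mu : S -> A -> R).
Hypothesis d0_distr : is_distr d0.
Hypothesis G_in_G0 : in_G0 s_tri s_circ P gamma d0 Vs Q mu.
Let Q_bar : is_Qbar s_tri s_circ Q. Proof. by case: G_in_G0. Qed.
Let mu_policy : is_policy mu. Proof. by case: G_in_G0 => _ []. Qed.
Let mu_ge0 := policy_ge0 mu_policy.

Local Notation fQ := (at_pol Q mu).

Lemma Q_ge0_le1 s a : 0 <= Q s a <= 1.
Proof.
case: Q_bar => Q_safe [Q_tri Q_circ].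
have [s_safe|s_unsafe] := boolP (safe s); first exact: Q_safe.
by case: (unsafeP s_unsafe) => ->; rewrite ?Q_tri ?Q_circ ?lexx ?lee01.
Qed.

Lemma fQ_ge0 s : 0 <= fQ s.
Proof. by apply: expect_ge0 => // a; case/andP: (Q_ge0_le1 s a). Qed.

Lemma fQ_le1 s : fQ s <= 1.
Proof. by apply: expect_le_cst => // a; case/andP: (Q_ge0_le1 s a). Qed.

Lemma fQ_circ : fQ s_circ = 0.
Proof. by case: Q_bar => _ [_ Q_circ]; exact: at_pol_cst. Qed.

Lemma backup_fQ_le s a : backup fQ s a <= Q s a.
Proof.
case: G_in_G0 => _ [_ [Q_adm _]].
have [s_safe|s_unsafe] := boolP (safe s); first by case: (Q_adm s a s_safe).
case: Q_bar => _ [Q_tri Q_circ]; rewrite backup_unsafe ?fQ_circ//.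
by case: (unsafeP s_unsafe) => ->; rewrite ?Q_tri ?Q_circ ?cost_tri ?cost_circ.
Qed.

Lemma Vs_le_fQ s : Vs s <= fQ s.
Proof.
apply: le_trans (proj2 pistar_opt mu mu_policy s) _.
apply: (Vc_le_super _ _ _ P_ge0 gamma_ge0 _ mu_ge0 _ fQ_ge0) => x.
by apply: le_expect => // a; exact: backup_fQ_le.
Qed.

Lemma fQ_eq_Vs_init s : (0 < d0 s)%R -> fQ s = Vs s.
Proof.
case: G_in_G0 => _ [_ [_ init_eq]].
apply: (expect_le_eq_supp _ _ _ d0_distr Vs_ge0 Vs_le_fQ fQ_le1).
by move: init_eq; rewrite /at_init => ->.
Qed.

Lemma no_intervention_step s a y : (0 < gamma)%R -> fQ s = Vs s ->
  ~~ interv s_tri s_circ Q mu 0 s a -> (0 < P s a y)%R ->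
  ~~ interv s_tri s_circ Qs pistar 0 s a /\ fQ y = Vs y.
Proof.
move=> gamma_gt0 fQs; rewrite intervN0E// => Q_le_fQ Psy.
have Qs_le_backup : Qs s a <= backup fQ s a.
  exact: (le_backup _ _ _ P_ge0 gamma_ge0) Vs_le_fQ.
have backup_le_Vs : backup fQ s a <= Vs s.
  by rewrite -fQs; exact: le_trans (backup_fQ_le s a) Q_le_fQ.
split.
  have [Qs_bar _] := Qstar_in_G0 d0.
  by rewrite intervN0E// at_pol_Qs (le_trans Qs_le_backup).
apply: (expect_le_eq_supp _ _ _ (P_distr s a) Vs_ge0 Vs_le_fQ fQ_le1 _ y Psy).
apply: (backup_le_expect _ _ _ _ _ _ _ gamma_gt0).
exact: le_trans backup_le_Vs (Vs_le_Qs s a).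
Qed.

Variable pi : option S -> A -> R.
Hypothesis pi_policy : is_policy pi.
Let pi_ge0 := policy_ge0 pi_policy.

Local Notation FG := (flow (Pabs s_tri s_circ P Q mu 0) pi (init_abs d0)).
Local Notation FS := (flow (Pabs s_tri s_circ P Qs pistar 0) pi (init_abs d0)).

Lemma init_abs_ge0 x : 0 <= init_abs d0 x.
Proof. by case: x => [s|] //=; rewrite lee_fin; case: d0_distr. Qed.

Lemma reachable_invariant t s : (0 < gamma ^+ t)%R -> 0 < FG t (Some s) ->
  0 < FS t (Some s) /\ fQ s = Vs s.
Proof.
elim: t s => [|t IH] y gt_gt0; first by move=> /= d0y; rewrite fQ_eq_Vs_init -?lte_fin.
have gamma_gt0 : (0 < gamma)%R.
  by rewrite lt0r gamma_ge0 andbT; apply: contraTneq gt_gt0 => ->; rewrite expr0n ltxx.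
move/(flowS_gt0P _ _ (Pabs_ge0 Q mu 0) pi_ge0 _ _ _ init_abs_ge0).
move=> [[s|] [a [FGs pa]]]; rewrite /Pabs ?ltxx//; case: ifPn => [_|nI Psy].
  by rewrite ltxx.
have [FSs fQs] := IH s (exprn_gt0 t gamma_gt0) FGs.
have [nIs fQy] := no_intervention_step _ _ _ gamma_gt0 fQs nI Psy.
split=> //; apply/(flowS_gt0P _ _ (Pabs_ge0 Qs pistar 0) pi_ge0 _ _ _ init_abs_ge0).
by exists (Some s), a; rewrite /Pabs (negbTE nIs).
Qed.

Lemma dtilde_supp_sub s a :
  0 < dtilde s_tri s_circ P gamma d0 Q mu 0 pi s a ->
  0 < dtilde s_tri s_circ P gamma d0 Qs pistar 0 pi s a.
Proof.
have c_gt0 : 0 < (1 - gamma)%:E by rewrite lte_fin subr_gt0; case/andP: gamma01.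
have pa0 : 0 <= (pi (Some s) a)%:E by rewrite lee_fin.
have term_ge0 (F : nat -> option S -> \bar R) t : 0 <= F t (Some s) ->
    0 <= (gamma ^+ t)%:E * (F t (Some s) * (pi (Some s) a)%:E).
  by move=> F0; rewrite !mule_ge0 ?lee_fin ?exprn_ge0.
have FG0 t : 0 <= FG t (Some s).
  exact: (flow_ge0 _ _ (Pabs_ge0 Q mu 0) pi_ge0 _ t _ init_abs_ge0).
have FS0 t : 0 <= FS t (Some s).
  exact: (flow_ge0 _ _ (Pabs_ge0 Qs pistar 0) pi_ge0 _ t _ init_abs_ge0).
rewrite /dtilde !pmule_rgt0// => /(nneseries_gt0P _ (fun t => term_ge0 _ t (FG0 t))).
move=> [t]; have gt_ge0 : 0 <= (gamma ^+ t)%:E by rewrite lee_fin exprn_ge0.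
rewrite mule_ge0_gt0 ?mule_ge0// mule_ge0_gt0// lte_fin => /andP[gt /andP[FGt pa]].
apply/(nneseries_gt0P _ (fun t => term_ge0 _ t (FS0 t))); exists t.
have [FSt _] := reachable_invariant t s gt FGt.
by rewrite !mule_gt0 ?lte_fin.
Qed.

End rule_in_G0.
End safety_mdp.

Theorem mainTheorem5 (R : realType) (S A : choiceType) (s_tri s_circ : S)
  (P : S -> A -> S -> R) (gamma : R) (d0 : S -> R) :
  s_tri != s_circ ->
  (0 <= gamma < 1)%R ->
  (forall s a, is_distr (P s a)) ->
  (forall a, P s_tri a s_circ = 1%R) ->
  (forall a, P s_circ a s_circ = 1%R) ->
  is_distr d0 -> d0 s_circ = 0%R ->
  forall pistar : S -> A -> R,
  optimal_policy s_tri P gamma pistar ->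
  let Qstar := Qc s_tri P gamma pistar in
  let Vstar := Vc s_tri P gamma pistar in
  in_G0 s_tri s_circ P gamma d0 Vstar Qstar pistar /\
  forall (Q : S -> A -> \bar R) (mu : S -> A -> R),
    in_G0 s_tri s_circ P gamma d0 Vstar Q mu ->
    forall pi : option S -> A -> R, is_policy pi ->
    forall s a,
      0 < dtilde s_tri s_circ P gamma d0 Q mu 0 pi s a ->
      0 < dtilde s_tri s_circ P gamma d0 Qstar pistar 0 pi s a.
Proof.
move=> tri_neq_circ gamma01 P_distr P_tri P_circ d0_distr _ pistar pistar_opt.
split; first exact: Qstar_in_G0.
by move=> Q mu G_in_G0 pi pi_policy s a; apply: dtilde_supp_sub.
Qed.
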